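(* There exist finite MDPs $\mathcal{M}_1,\mathcal{M}_2,\mathcal{M}_3$, all defined on the same state and action space, such that $d_V(\mathcal{M}_1,\mathcal{M}_3)>d_V(\mathcal{M}_1,\mathcal{M}_2)+d_V(\mathcal{M}_2,\mathcal{M}_3)$. Hence $d_V$ is not a metric in general.
   Context: A finite MDP has finite state space, finite action space, transition distribution, bounded random reward, discount $\gamma\in[0,1)$ and a single initial state $s^\circ$. $V^\pi_i$ denotes the expected discounted value at $s^\circ$ of stationary policy $\pi$ in $\mathcal{M}_i$, $V^*_i$ the optimal value and $\pi^*_i$ the optimal policy (the lexicographically first if several). For MDPs on the same state and action spaces, $d_V(\mathcal{M}_i,\mathcal{M}_j)=\max\{V_i^*-V_i^{\pi^*_j},\,V_j^*-V_j^{\pi^*_i}\}$. *)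

From HB Require Import structures.
From mathcomp Require Import all_boot all_order all_algebra.
From mathcomp Require Import all_classical all_reals all_analysis.
From mathcomp Require Import Rstruct Rstruct_topology.
From Stdlib Require Import Rdefinitions.
Notation R := Rdefinitions.R.
Set Implicit Arguments. Unset Strict Implicit. Unset Printing Implicit Defensive.
Import Order.TTheory GRing.Theory Num.Theory.
Local Open Scope ring_scope.
Local Open Scope classical_set_scope.

(* A finite MDP on state space S and action space A (both finite types).
   Rewards are represented by their (finite) mean r s a: the discounted value
   only depends on the mean reward. *)
Record mdp (S A : finType) := MDP {
  trans : S -> A -> S -> R;
  trans_ge0 : forall s a s', 0 <= trans s a s';
  trans_sum1 : forall s a, \sum_(s' : S) trans s a s' = 1;
  reward : S -> A -> R;
  gamma : R;
  gamma_ge0 : 0 <= gamma;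
  gamma_lt1 : gamma < 1;
  init : S
}.

Section MDPDefs.
Variables (S A : finType).

Definition policy := {ffun S -> A}.

Fixpoint exp_reward (M : mdp S A) (pi : policy) (t : nat) (s : S) : R :=
  match t with
  | 0 => reward M s (pi s)
  | t'.+1 => \sum_(s' : S) trans M s (pi s) s' * exp_reward M pi t' s'
  end.

Definition value_at (M : mdp S A) (pi : policy) (s : S) : R :=
  limn (series (fun t : nat => gamma M ^+ t * exp_reward M pi t s)).

Definition value (M : mdp S A) (pi : policy) : R := value_at M pi (init M).

Definition opt_value (M : mdp S A) : R := sup (range (value M)).

Definition is_optimal (M : mdp S A) (pi : policy) : bool :=
  [forall q : policy, [forall s : S, value_at M q s <= value_at M pi s]].

Definition lex_lt (f g : policy) : bool :=
  [exists s : S, [forall s' : S, ltn (enum_rank s') (enum_rank s) ==> (f s' == g s')]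
                 && ltn (enum_rank (f s)) (enum_rank (g s))].

Definition opt_policy (M : mdp S A) : option policy :=
  [pick pi | is_optimal M pi && [forall q : policy, is_optimal M q ==> ~~ lex_lt q pi]].

Definition value_of_opt (Mi Mj : mdp S A) : R :=
  if opt_policy Mj is Some p then value Mi p else 0.

Definition dV (Mi Mj : mdp S A) : R :=
  Num.max (opt_value Mi - value_of_opt Mi Mj) (opt_value Mj - value_of_opt Mj Mi).

End MDPDefs.

From HB Require Import structures.
From mathcomp Require Import all_boot all_order all_algebra.
From mathcomp Require Import all_classical all_reals all_analysis.
From mathcomp Require Import Rstruct Rstruct_topology.
Set Implicit Arguments. Unset Strict Implicit. Unset Printing Implicit Defensive.
Import Order.TTheory GRing.Theory Num.Theory.
Local Open Scope ring_scope.
Local Open Scope classical_set_scope.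

(* Counterexample by one-state bandits with discount 0, where the value of a
   policy is the mean reward of the action it plays.  With action rewards
   (2,0), (1,0) and (0,1), the first two bandits share their optimal action, so
   d_V(M1,M2) = 0, while d_V(M2,M3) = 1 and d_V(M1,M3) = 2. *)

Lemma limn_eventually_cst (u : nat -> R) (l : R) :
  (\forall n \near \oo, u n = l) -> limn u = l.
Proof. by move=> ul; apply: cvg_lim; [exact: Rhausdorff | exact: cvg_near_cst]. Qed.

Lemma lex_lt_irr (S A : finType) (pi : policy S A) : ~~ lex_lt pi pi.
Proof. by apply/existsP => -[s /andP[_]]; rewrite /ltn /= ltnn. Qed.

Section Bandit.
Variables (A : finType) (f : A -> R).

Lemma bandit_trans_ge0 (s : unit) (a : A) (s' : unit) : (0 : R) <= 1.
Proof. exact: ler01. Qed.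

Lemma bandit_trans_sum1 (s : unit) (a : A) : \sum_(s' : unit) (1 : R) = 1.
Proof. by rewrite big_const card_unit /= addr0. Qed.

Definition bandit : mdp unit A :=
  @MDP unit A (fun _ _ _ => 1) bandit_trans_ge0 bandit_trans_sum1
    (fun _ a => f a) 0 (lexx 0) ltr01 tt.

Lemma value_at_bandit (pi : policy unit A) (s : unit) :
  value_at bandit pi s = f (pi tt).
Proof.
apply: limn_eventually_cst; exists 1%N => // -[//|n] _.
rewrite /series /= big_nat_recl //= expr0 mul1r big1 ?addr0; first by case: s.
by move=> i _; rewrite exprS !mul0r.
Qed.

Lemma value_bandit (pi : policy unit A) : value bandit pi = f (pi tt).
Proof. exact: value_at_bandit. Qed.

Lemma opt_value_bandit (a : A) :
  (forall b, f b <= f a) -> opt_value bandit = f a.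
Proof.
move=> fa_max; have play_a : f a = value bandit [ffun => a].
  by rewrite value_bandit ffunE.
apply/eqP; rewrite eq_le; apply/andP; split.
- apply: ge_sup; first by exists (f a), [ffun => a].
  by move=> _ [pi _ <-]; rewrite value_bandit.
- rewrite play_a; apply: ub_le_sup; last by exists [ffun => a].
  by exists (f a) => _ [pi _ <-]; rewrite value_bandit.
Qed.

Section StrictMaximizer.
Variable a : A.
Hypothesis fa_strict_max : forall b, b != a -> f b < f a.

Lemma strict_max_le (b : A) : f b <= f a.
Proof. by case: (eqVneq b a) => [->|/fa_strict_max/ltW]. Qed.

Lemma is_optimal_banditE (pi : policy unit A) :
  is_optimal bandit pi = (pi == [ffun => a]).
Proof.
apply/idP/eqP => [/forallP/(_ [ffun => a])/forallP/(_ tt)|->].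
  rewrite !value_at_bandit ffunE => fa_le.
  apply/ffunP => -[]; rewrite ffunE; apply/eqP/negPn/negP => /fa_strict_max.
  by rewrite ltNge fa_le.
by apply/forallP => q; apply/forallP => s; rewrite !value_at_bandit ffunE; exact: strict_max_le.
Qed.

Lemma opt_policy_bandit : opt_policy bandit = Some [ffun => a].
Proof.
rewrite /opt_policy; case: pickP => [pi /andP[]|]; first by rewrite is_optimal_banditE => /eqP->.
move/(_ [ffun => a]); rewrite is_optimal_banditE eqxx /= => /negbT/negP[].
by apply/forallP => q; rewrite is_optimal_banditE; apply/implyP => /eqP->; exact: lex_lt_irr.
Qed.

End StrictMaximizer.
End Bandit.

Lemma dV_bandit (A : finType) (f g : A -> R) (a b : A) :
  (forall c, c != a -> f c < f a) -> (forall c, c != b -> g c < g b) ->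
  dV (bandit f) (bandit g) = Num.max (f a - f b) (g b - g a).
Proof.
move=> fa_max gb_max.
rewrite /dV /value_of_opt (opt_policy_bandit fa_max) (opt_policy_bandit gb_max).
rewrite !value_bandit !ffunE.
by rewrite (opt_value_bandit (strict_max_le fa_max)) (opt_value_bandit (strict_max_le gb_max)).
Qed.

Definition r1 (a : bool) : R := if a then 2 else 0.
Definition r2 (a : bool) : R := if a then 1 else 0.
Definition r3 (a : bool) : R := if a then 0 else 1.

Theorem lemma5 :
  exists (S A : finType) (M1 M2 M3 : mdp S A),
    dV M1 M2 + dV M2 M3 < dV M1 M3.
Proof.
have r1_max c : c != true -> r1 c < r1 true by case: c => //= _; rewrite ltr0n.
have r2_max c : c != true -> r2 c < r2 true by case: c => //= _; rewrite ltr01.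
have r3_max c : c != false -> r3 c < r3 false by case: c => //= _; rewrite ltr01.
exists unit, bool, (bandit r1), (bandit r2), (bandit r3).
rewrite (dV_bandit r1_max r2_max) (dV_bandit r2_max r3_max) (dV_bandit r1_max r3_max).
by rewrite /r1 /r2 /r3 !subrr !subr0 !maxxx add0r lt_max ltr1n.
Qed.
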